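(* Let $f$, $c$, $h$, $\tilde h$ be as in the context, let $F_0$ be a probability distribution on $[\mu_{\min},\mu_{\max}]$ and let $L_{F_0}$ be the unique solution of $\int_{\mu_{\min}}^{\mu_{\max}}\mu\frac{1+\beta}{\bar\mu_{F_0}(1+L_{F_0}\tilde h(\mu))}dF_0(\mu)=\beta$. Then for any $a>0$ the function \[ U(\mu)=f\Big(\big(1+L_{F_0}\tilde h(\mu)\big)^{-1}\Big)-a\,c(\mu) \] is concave on $[\mu_{\min},\mu_{\max}]$.
   Context: $0<\mu_{\min}\le\mu_{\max}<\infty$, $\beta>0$; $\bar\mu_{F_0}$ is the mean of $F_0$. The utility-of-idleness function $f$ is concave, increasing and twice continuously differentiable; the effort cost function $c$ is convex, increasing and twice continuously differentiable. $h:[\mu_{\min},\mu_{\max}]\to\mathbb R$ satisfies $h(\mu)>0$, and $\tilde h(\mu)=h(\mu)/\mu$ is convex, strictly decreasing, twice differentiable, and satisfies $2\tilde h'(\mu)^2\le\tilde h(\mu)\tilde h''(\mu)$ for all $\mu\in[\mu_{\min},\mu_{\max}]$. *)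

From HB Require Import structures.
From mathcomp Require Import all_boot all_order all_algebra.
From mathcomp Require Import all_classical all_reals all_analysis.
Set Implicit Arguments. Unset Strict Implicit. Unset Printing Implicit Defensive.
Import Order.TTheory GRing.Theory Num.Theory.
Import numFieldNormedType.Exports.
Local Open Scope classical_set_scope.
Local Open Scope ring_scope.

Definition concave_on (R : realType) (I : set R) (g : R -> R) : Prop :=
  forall x y t : R, I x -> I y -> 0 <= t -> t <= 1 ->
    t * g x + (1 - t) * g y <= g (t * x + (1 - t) * y).

Definition convex_on (R : realType) (I : set R) (g : R -> R) : Prop :=
  forall x y t : R, I x -> I y -> 0 <= t -> t <= 1 ->
    g (t * x + (1 - t) * y) <= t * g x + (1 - t) * g y.

Definition increasing_on (R : realType) (I : set R) (g : R -> R) : Prop :=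
  forall x y : R, I x -> I y -> x < y -> g x < g y.

Definition strictly_decreasing_on (R : realType) (I : set R) (g : R -> R) : Prop :=
  forall x y : R, I x -> I y -> x < y -> g y < g x.

Definition C2_on (R : realType) (I : set R) (g : R -> R) : Prop :=
  forall x : R, I x ->
    [/\ derivable g x 1, derivable ((g^`())%classic) x 1 & {for x, continuous (g^`()^`())%classic}].

Definition D2_on (R : realType) (I : set R) (g : R -> R) : Prop :=
  forall x : R, I x -> derivable g x 1 /\ derivable ((g^`())%classic) x 1.

Definition mean_on (R : realType) (P : probability R R) (a b : R) : R :=
  Rintegral P `[a, b] (fun mu => mu).

Definition LF0_eq (R : realType) (P : probability R R) (a b beta : R)
    (ht : R -> R) (L : R) : Prop :=
  Rintegral P `[a, b]
    (fun mu => mu * (1 + beta) / (mean_on P a b * (1 + L * ht mu))) = beta.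

From HB Require Import structures.
From mathcomp Require Import all_boot all_order all_algebra.
From mathcomp Require Import all_classical all_reals all_analysis.
From mathcomp Require Import measurable_realfun ring lra.
Import Order.TTheory GRing.Theory Num.Theory.
Import numFieldNormedType.Exports.
Local Open Scope classical_set_scope.
Local Open Scope ring_scope.
Set Implicit Arguments. Unset Strict Implicit. Unset Printing Implicit Defensive.

(* Write psi := 1 / h~ and g p := (1 + L / p)^-1 = p / (p + L), so that the function is
   f (g (psi mu)) - a c(mu).  Since (-1/h~)'' = (h~ h~'' - 2 h~'^2) / h~^3, the hypothesis
   2 h~'^2 <= h~ h~'' says exactly that psi is concave.  For L >= 0, g is concave and
   nondecreasing on ]0, +oo[, and so is f; a concave nondecreasing function of a concave
   function is concave, and subtracting the convex a c preserves concavity.  Finally L > 0: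
   if L <= 0, the integrand of the defining equation is at least mu (1 + beta) / mean, whose
   integral is 1 + beta > beta. *)

Section concavity.
Variable R : realType.
Implicit Types (I J : set R) (f g : R -> R).

Definition nondecreasing_on I g := forall x y, I x -> I y -> x <= y -> g x <= g y.

Lemma increasing_on_nondecreasing I g : increasing_on I g -> nondecreasing_on I g.
Proof. by move=> gi x y Ix Iy; rewrite le_eqVlt => /predU1P[->|/(gi _ _ Ix Iy)/ltW]. Qed.

Lemma is_interval_conv I x y t : is_interval I -> I x -> I y ->
  0 <= t -> t <= 1 -> I (t * x + (1 - t) * y).
Proof.
move=> iI Ix Iy t0 t1; have [xy|yx] := leP x y.
- by apply: (iI x y) => //; apply/andP; split; nra.
- by apply: (iI y x) => //; apply/andP; split; nra.
Qed.

Lemma concave_on_itv_lt a b g :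
  (forall x y t, a <= x -> x < y -> y <= b -> 0 <= t -> t <= 1 ->
     t * g x + (1 - t) * g y <= g (t * x + (1 - t) * y)) ->
  concave_on `[a, b] g.
Proof.
move=> glt x y t /=; rewrite !in_itv /= => /andP[ax xb] /andP[ay yb] t0 t1.
have [xy|yx|<-] := ltgtP x y; first exact: glt.
- have := glt y x (1 - t) ay yx xb; rewrite subr_ge0 t1 gerBl t0 subKr.
  by rewrite addrC [X in _ <= g X]addrC; apply.
- by rewrite -!mulrDl addrC subrK !mul1r.
Qed.

Lemma concave_on_comp I J f g : is_interval I -> is_interval J ->
  concave_on J f -> nondecreasing_on J f ->
  concave_on I g -> (forall x, I x -> J (g x)) -> concave_on I (f \o g).
Proof.
move=> iI iJ fc fnd gc gIJ x y t Ix Iy t0 t1 /=.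
apply: le_trans (fc _ _ _ (gIJ _ Ix) (gIJ _ Iy) t0 t1) _.
apply: fnd; last exact: gc.
- exact: is_interval_conv iJ (gIJ _ Ix) (gIJ _ Iy) t0 t1.
- exact: gIJ (is_interval_conv iI Ix Iy t0 t1).
Qed.

Lemma concave_on_sub_convex I f c a : 0 <= a ->
  concave_on I f -> convex_on I c -> concave_on I (fun x => f x - a * c x).
Proof.
move=> a0 fc cc x y t Ix Iy t0 t1.
have := fc x y t Ix Iy t0 t1; have := ler_wpM2l a0 (cc x y t Ix Iy t0 t1).
lra.
Qed.

End concavity.

Section saturation.
Variables (R : realType) (L : R).
Hypothesis L_ge0 : 0 <= L.

Lemma inv1Ddiv_E (p : R) : 0 < p -> (1 + L / p)^-1 = p / (p + L).
Proof. by move=> p0; field; rewrite !gt_eqF // ltr_pwDl. Qed.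

Lemma inv1Ddiv_gt0 (p : R) : 0 < p -> 0 < (1 + L / p)^-1.
Proof. by move=> p0; rewrite inv1Ddiv_E // divr_gt0 // ltr_pwDl. Qed.

Lemma nondecreasing_inv1Ddiv : nondecreasing_on `]0, +oo[ (fun p => (1 + L / p)^-1).
Proof.
move=> p q /=; rewrite !in_itv /= !andbT => p0 q0 pq.
have Dpos r : 0 < r -> 1 + L / r \is Num.pos.
  by move=> r0; rewrite posrE ltr_wpDr // divr_ge0 // ltW.
rewrite lef_pV2 ?Dpos // lerD2l ler_wpM2l // lef_pV2 ?posrE //.
Qed.

Lemma concave_inv1Ddiv : concave_on `]0, +oo[ (fun p => (1 + L / p)^-1).
Proof.
move=> x y t /=; rewrite !in_itv /= !andbT => x0 y0 t0 t1.
set w := t * x + (1 - t) * y.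
have w0 : 0 < w by rewrite /w; nra.
rewrite !inv1Ddiv_E // -subr_ge0.
have [xL yL wL] : [/\ 0 < x + L, 0 < y + L & 0 < w + L] by split; rewrite ltr_pwDl.
have -> : w / (w + L) - (t * (x / (x + L)) + (1 - t) * (y / (y + L))) =
    L * t * (1 - t) * (x - y) ^+ 2 / ((x + L) * (y + L) * (w + L)).
  by rewrite /w; field; rewrite !gt_eqF.
apply: divr_ge0; last by rewrite ltW // !mulr_gt0.
by rewrite mulr_ge0 ?sqr_ge0 // !mulr_ge0 // subr_ge0.
Qed.

End saturation.

Section inverse_concavity.
Variable R : realType.
Implicit Types (h : R -> R) (a b x : R).

Lemma is_derive_Ninv h x : h x != 0 -> derivable h x 1 ->
  is_derive x 1 (fun y => - (h y)^-1) ('D_1 h x / h x ^+ 2).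
Proof.
move=> hx0 dh; apply: is_derive_eq (is_deriveN (is_deriveV hx0 (derivableP dh))) _.
by rewrite scaleNr opprK mulrC.
Qed.

Lemma is_derive2_Ninv h a b x :
  {in `]a, b[, forall y, h y != 0 /\ derivable h y 1} ->
  x \in `]a, b[ -> derivable ('D_1 h) x 1 ->
  is_derive x 1 ('D_1 (fun y => - (h y)^-1))
    ((h x * 'D_1 ('D_1 h) x - 2 * 'D_1 h x ^+ 2) / h x ^+ 3).
Proof.
move=> hD xab dDh; have [hx0 dh] := hD x xab.
have DNinvE : \forall y \near x, 'D_1 h y / h y ^+ 2 = 'D_1 (fun y => - (h y)^-1) y.
  near=> y; have [hy0 dhy] : h y != 0 /\ derivable h y 1.
    by apply: hD; near: y; exact: near_in_itvoo.
  by rewrite (@derive_val _ _ _ _ _ _ _ (is_derive_Ninv hy0 dhy)).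
apply: near_eq_is_derive DNinvE _.
apply: is_derive_eq (is_deriveM (derivableP dDh)
  (is_deriveV (f := h ^+ 2) (expf_neq0 2 hx0) (is_deriveX 2 (derivableP dh)))) _.
rewrite /= expr1 /GRing.scale /= (_ : (h ^+ 2) x = h x ^+ 2) //; field.
Unshelve. all: by end_near.
Qed.

Lemma concave_on_inv h a b :
  (forall x, a <= x <= b -> 0 < h x) -> {within `[a, b], continuous h} ->
  D2_on `]a, b[ h ->
  (forall x, a < x < b -> 2 * (h^`()%classic x) ^+ 2 <= h x * (h^`()^`())%classic x) ->
  concave_on `[a, b] (fun x => (h x)^-1).
Proof.
move=> h0 hcont hD2 hDD; apply: concave_on_itv_lt => x y t ax xy yb t0 t1.
have D1E : (h^`())%classic = 'D_1 h by apply/funext => z; rewrite derive1E.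
have D2E : (h^`()^`())%classic = 'D_1 ('D_1 h) by apply/funext => z; rewrite derive1E D1E.
rewrite D2E D1E in hDD.
have itv_ab z : z \in `]a, b[ -> a <= z <= b.
  by rewrite in_itv /= => /andP[/ltW -> /ltW ->].
have hD : {in `]a, b[, forall z, h z != 0 /\ derivable h z 1}.
  move=> z zab; split; last exact: (hD2 z zab).1.
  exact/lt0r_neq0/h0/itv_ab.
have dDh : {in `]a, b[, forall z, derivable ('D_1 h) z 1}.
  by move=> z zab; rewrite -D1E; exact: (hD2 z zab).2.
have xy_ab : {subset `]x, y[ <= `]a, b[}.
  move=> z; rewrite !in_itv /= => /andP[xz zy].
  by rewrite (le_lt_trans ax xz) (lt_le_trans zy yb).
pose F z := - (h z)^-1.
have DDF_ge0 z : x < z < y -> 0 <= 'D_1 ('D_1 F) z.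
  move=> xzy; have zab : z \in `]a, b[ by apply: xy_ab; rewrite in_itv.
  rewrite (@derive_val _ _ _ _ _ _ _ (is_derive2_Ninv hD zab (dDh z zab))).
  have hz0 : 0 < h z by apply/h0/itv_ab.
  apply: divr_ge0; last exact/ltW/exprn_gt0.
  by rewrite subr_ge0; apply: hDD; move: zab; rewrite in_itv.
have xy_cc_ab : `[x, y] `<=` `[a, b].
  move=> z /=; rewrite !in_itv /= => /andP[xz zy].
  by rewrite (le_trans ax xz) (le_trans zy yb).
have [_ hcont_x hcont_y] :=
  (continuous_within_itvP h xy).1 (continuous_subspaceW xy_cc_ab hcont).
have hx0 : h x != 0 by apply/lt0r_neq0/h0; rewrite ax (le_trans (ltW xy) yb).
have hy0 : h y != 0 by apply/lt0r_neq0/h0; rewrite yb (le_trans ax (ltW xy)).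
have dF : {in `]x, y[, forall z, derivable F z 1}.
  move=> z /xy_ab zab; have [hz0 dhz] := hD z zab.
  exact: (@ex_derive _ _ _ _ _ _ _ (is_derive_Ninv hz0 dhz)).
have dDF : {in `]x, y[, forall z, derivable ('D_1 F) z 1}.
  move=> z /xy_ab zab; exact: (@ex_derive _ _ _ _ _ _ _ (is_derive2_Ninv hD zab (dDh z zab))).
have := second_derivative_convex DDF_ge0 (cvgN (cvgV hy0 hcont_y))
  (cvgN (cvgV hx0 hcont_x)) dF dDF (Itv01 t0 t1) (ltW xy).
rewrite !convRE /= /unstable.onem /F !mulrN -opprD lerN2.
by apply; exact: _. (* the remaining premises are Filter instances *)
Qed.

End inverse_concavity.

Section integrals.
Context d (T : measurableType d) (R : realType) (mu : {measure set T -> \bar R}).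

Lemma integrable_Rintegral_neq0 (D : set T) (f : T -> R) :
  measurable D -> measurable_fun D f -> (forall x, D x -> 0 <= f x) ->
  \int[mu]_(x in D) f x != 0 -> mu.-integrable D (EFin \o f).
Proof.
move=> mD mf f0 nz; apply/integrableP; split; first exact/measurable_EFinP.
rewrite (eq_integral (EFin \o f)); last first.
  by move=> x; rewrite inE => Dx /=; rewrite ger0_norm // f0.
by rewrite ltey; apply: contra nz => /eqP; rewrite /Rintegral => ->.
Qed.

End integrals.

Lemma integrable_id_itv (R : realType) (mu : {measure set R -> \bar R}) (a b : R) :
  (mu `[a, b]%classic < +oo)%E -> mu.-integrable `[a, b]%classic (EFin \o id).
Proof.
move=> mfin; have mab : measurable `[a, b]%classic by exact: measurable_itv.
apply: measurable_bounded_integrable => //.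
exists (`|a| + `|b|); split; first exact: num_real.
move=> M /ltW ltM x /=; rewrite in_itv /= => /andP[ax xb]; apply: le_trans ltM.
have := ler_norm (- a); have := ler_norm b; have := normr_ge0 a; have := normr_ge0 b.
rewrite normrN ler_norml => ? ? ? ?; apply/andP; split; lra.
Qed.

Section equation_for_L.
Variables (R : realType) (P : probability R R) (a b : R).
Hypothesis Pab : P `[a, b]%classic = 1%E.

Let Pab_fin : (P `[a, b]%classic < +oo)%E.
Proof. by rewrite Pab ltry. Qed.

Let integrable_id : P.-integrable `[a, b]%classic (EFin \o id).
Proof. exact: integrable_id_itv Pab_fin. Qed.

Lemma mean_on_ge : a <= mean_on P a b.
Proof.
have mab : measurable `[a, b]%classic by exact: measurable_itv.
have cstE : \int[P]_(x in `[a, b]%classic) a = a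
  by rewrite Rintegral_cst // (_ : fine (P `[a, b]%classic) = 1) ?mulr1 // Pab.
rewrite -[leLHS]cstE.
apply: le_Rintegral => //; first exact: finite_measure_integrable_cst.
by move=> x /=; rewrite in_itv /= => /andP[].
Qed.

Lemma LF0_eq_gt0 beta (ht : R -> R) L : 0 < a -> 0 < beta ->
  (forall mu, a <= mu <= b -> 0 < ht mu) -> {within `[a, b]%classic, continuous ht} ->
  (forall mu, a <= mu <= b -> 0 < 1 + L * ht mu) ->
  LF0_eq P a b beta ht L -> 0 < L.
Proof.
move=> a0 beta0 ht0 htcont hL eqL; rewrite ltNge; apply/negP => L_le0.
set S := `[a, b]%classic; have mS : measurable S by exact: measurable_itv.
have Sab mu : S mu -> a <= mu <= b by rewrite /S /= in_itv.
set m := mean_on P a b; have m0 : 0 < m := lt_le_trans a0 mean_on_ge.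
set k := (1 + beta) / m; have k0 : 0 < k by rewrite divr_gt0 // ltr_wpDr // ltW.
set q := fun mu => mu * (1 + beta) / (m * (1 + L * ht mu)).
have q_ge mu : S mu -> mu * k <= q mu.
  move=> Smu; have /andP[amu _] := Sab mu Smu; have hL0 := hL mu (Sab mu Smu).
  have hL1 : 1 + L * ht mu <= 1.
    by rewrite gerDl mulr_le0_ge0 // (ltW (ht0 _ (Sab _ Smu))).
  have -> : q mu = mu * k / (1 + L * ht mu).
    by rewrite /q /k invfM !mulrA [_ / m / _]mulrAC.
  by rewrite ler_pdivlMr // ler_piMr // mulr_ge0 // ltW // (lt_le_trans a0).
have qcont : {within S, continuous q}.
  apply/subspace_continuousP => x Sx; have hLx := hL x (Sab x Sx).
  apply: cvgM; first by apply: cvgM; [exact: cvg_within_filter cvg_id | exact: cvg_cst].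
  apply: cvgV; first by rewrite mulf_neq0 // gt_eqF.
  apply: cvgM; first exact: cvg_cst.
  apply: cvgD; first exact: cvg_cst.
  by apply: cvgM; [exact: cvg_cst | exact: (subspace_continuousP S ht).1 htcont x Sx].
have q_int : P.-integrable S (EFin \o q).
  apply: integrable_Rintegral_neq0 => //.
  - exact: subspace_continuous_measurable_fun.
  - move=> mu Smu; apply: le_trans (q_ge mu Smu).
    by rewrite mulr_ge0 // ltW // (lt_le_trans a0) //; case/andP: (Sab mu Smu).
  - by rewrite [X in X != 0]eqL gt_eqF.
have idk_int : P.-integrable S (EFin \o (fun mu => mu * k)).
  by apply: eq_integrable (integrableZr mS k integrable_id).
have := le_Rintegral mS idk_int q_int q_ge.
rewrite RintegralZr // -/(mean_on P a b) -/m /k mulrCA divff ?gt_eqF // mulr1.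
have -> : \int[P]_(x in S) q x = beta := eqL.
lra.
Qed.

End equation_for_L.

Theorem lemma5 (R : realType) (mumin mumax beta : R)
  (f c h : R -> R) (P : probability R R) (L a : R) :
  0 < mumin -> mumin <= mumax -> 0 < beta ->
  (* f : concave, increasing, C^2 (on the idleness range ]0, +oo[) *)
  concave_on (`]0, +oo[)%classic f -> increasing_on (`]0, +oo[)%classic f -> C2_on (`]0, +oo[)%classic f ->
  (* c : convex, increasing, C^2 on [mumin, mumax] *)
  convex_on (`[mumin, mumax])%classic c -> increasing_on (`[mumin, mumax])%classic c ->
  {within (`[mumin, mumax])%classic, continuous c} -> C2_on (`]mumin, mumax[)%classic c ->
  (* h and h~ = h / mu *)
  (forall mu, mumin <= mu <= mumax -> 0 < h mu) ->
  let ht := fun mu => h mu / mu in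
  convex_on (`[mumin, mumax])%classic ht -> strictly_decreasing_on (`[mumin, mumax])%classic ht ->
  {within (`[mumin, mumax])%classic, continuous ht} -> D2_on (`]mumin, mumax[)%classic ht ->
  (forall mu, mumin < mu < mumax -> 2 * ((ht^`())%classic mu) ^+ 2 <= ht mu * (ht^`()^`())%classic mu) ->
  (* F0 is a probability distribution on [mumin, mumax] *)
  P (`[mumin, mumax])%classic = 1%E ->
  (* L = L_{F0}: the unique (admissible) solution of the defining equation *)
  (forall mu, mumin <= mu <= mumax -> 0 < 1 + L * ht mu) ->
  LF0_eq P mumin mumax beta ht L ->
  (forall L', (forall mu, mumin <= mu <= mumax -> 0 < 1 + L' * ht mu) ->
     LF0_eq P mumin mumax beta ht L' -> L' = L) ->
  0 < a ->
  concave_on (`[mumin, mumax])%classic (fun mu => f ((1 + L * ht mu)^-1) - a * c mu).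
Proof.
move=> mumin0 _ beta0 fc fi _ cc _ _ _ h0 ht _ _ htcont htD2 htDD Pab hL eqL _ a0.
have ht0 mu : mumin <= mu <= mumax -> 0 < ht mu.
  by move=> /[dup] /h0 hmu /andP[mu_ge _]; rewrite divr_gt0 // (lt_le_trans mumin0).
have L0 : 0 < L := LF0_eq_gt0 Pab mumin0 beta0 ht0 htcont hL eqL.
pose g p := (1 + L / p)^-1.
have psi_pos mu : `[mumin, mumax]%classic mu -> `]0, +oo[%classic ((ht mu)^-1).
  by rewrite /= !in_itv /= andbT invr_gt0 => /ht0.
have g_pos p : `]0, +oo[%classic p -> `]0, +oo[%classic (g p).
  by rewrite /= !in_itv /= !andbT => /(inv1Ddiv_gt0 (ltW L0)).
have g_psi_concave : concave_on `[mumin, mumax] (g \o fun mu => (ht mu)^-1).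
  apply: concave_on_comp (concave_inv1Ddiv (ltW L0)) (nondecreasing_inv1Ddiv (ltW L0))
    (concave_on_inv ht0 htcont htD2 htDD) psi_pos; exact: interval_is_interval.
have f_g_psi_concave : concave_on `[mumin, mumax] (f \o (g \o fun mu => (ht mu)^-1)).
  apply: concave_on_comp fc (increasing_on_nondecreasing fi) g_psi_concave _.
  - exact: interval_is_interval.
  - exact: interval_is_interval.
  - by move=> mu /psi_pos /g_pos.
have := concave_on_sub_convex (ltW a0) f_g_psi_concave cc.
by congr concave_on; apply/funext => mu; rewrite /g /= invrK.
Qed.
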